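(* Let $\mathbf{k}$ be an algebraically closed field, $V=\mathbf{k}^n$, $G=\mathrm{GL}(V)$, $\underline{G}=G\ltimes V$. Let $\lambda[q]$ be an enhanced partition of $n$, $\lambda=(a_1\ge\dots\ge a_t>0)$, let $X$ be nilpotent of Jordan type $\lambda$ with Jordan basis $\{X^kv_i:1\le i\le t,0\le k\le a_i-1\}$ ($X^{a_i}v_i=0$), and put $$\hat w=\sum_{i=1}^{q}\sum_{k=1}^{a_i-1}X^kv_i+\sum_{i=q+1}^{t}\sum_{k=0}^{a_i-1}X^kv_i.$$ Then $\overline{\mathcal{O}_{\lambda[q]}}=\overline{G\cdot(X,\hat w)}$, where $G\cdot(X,\hat w)=\{(gXg^{-1},g\hat w):g\in G\}$.
   Context: $\underline{G}$ is $G\times V$ with product $(g_1,v_1)(g_2,v_2)=(g_1g_2,g_1v_2+v_1)$ and adjoint action $\mathrm{Ad}(g,v)(X,w)=(gXg^{-1},-(gXg^{-1})v+gw)$. Write $\lambda=(b_1^{d_1}\cdots b_r^{d_r})$ with $b_1>\dots>b_r$ (each $b_i$ occurring $d_i>0$ times), $d_0=0$; an enhanced partition $\lambda[q]$ has $q\in\{d_0+\dots+d_{j-1}:1\le j\le r+1\}$. With $u_j=v_{d_1+\dots+d_j}$ ($1\le j\le r$), $u_{r+1}=0$, $\mathcal{O}_{\lambda[q]}$ is the $\underline{G}$-orbit of $(X,u_j)$ where $q=d_0+\dots+d_{j-1}$. Closures are Zariski closures in $\mathfrak{gl}(V)\times V$. *)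

From HB Require Import structures.
From mathcomp Require Import all_boot all_order all_algebra.
From mathcomp Require Import mpoly.

Set Implicit Arguments.
Unset Strict Implicit.
Unset Printing Implicit Defensive.

Import GRing.Theory.
Local Open Scope ring_scope.

Notation pt k n := ('M[k]_n * 'cV[k]_n)%type.

Definition coords (k : fieldType) (n : nat) (p : pt k n) : 'I_(n * n + n) -> k :=
  fun i => row_mx (mxvec p.1) (p.2)^T 0 i.

Definition zclosure (k : fieldType) (n : nat) (S : pt k n -> Prop) : pt k n -> Prop :=
  fun p => forall P : {mpoly k[n * n + n]},
    (forall x, S x -> P.@[coords x] = 0) -> P.@[coords p] = 0.

(* The orbit of (X,w) under underline{G} = GL(V) |x V with the adjoint action
   Ad(g,v)(X,w) = (gXg^{-1}, -(gXg^{-1})v + gw). *)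
Definition Gbar_orbit (k : fieldType) (n : nat) (X : 'M[k]_n) (w : 'cV[k]_n)
  : pt k n -> Prop :=
  fun p => exists (g : 'M[k]_n) (v : 'cV[k]_n), g \in unitmx /\
    p = (g *m X *m invmx g, - ((g *m X *m invmx g) *m v) + g *m w).

Definition G_orbit (k : fieldType) (n : nat) (X : 'M[k]_n) (w : 'cV[k]_n)
  : pt k n -> Prop :=
  fun p => exists g : 'M[k]_n, g \in unitmx /\ p = (g *m X *m invmx g, g *m w).

Definition is_partition (n : nat) (lam : seq nat) : Prop :=
  sorted geq lam /\ all (fun a => 0 < a)%N lam /\ sumn lam = n.

(* Enhanced partition index (0-indexed parts): q = d_0 + ... + d_{j-1} for some
   1 <= j <= r+1, i.e. q is 0, t, or a position where the part size drops. *)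
Definition enhanced_index (lam : seq nat) (q : nat) : bool :=
  [&& (q <= size lam)%N &
      [|| q == 0%N, q == size lam | nth 0%N lam q.-1 != nth 0%N lam q]].

(* The Jordan family {X^k v_i : 1 <= i <= t, 0 <= k <= a_i - 1}
   (v is 0-indexed: v 0, ..., v (t-1)). *)
Definition jordan_family (k : fieldType) (n : nat) (X : 'M[k]_n)
  (lam : seq nat) (v : nat -> 'cV[k]_n) : seq 'cV[k]_n :=
  flatten [seq [seq (X ^+ j) *m v i | j <- iota 0 (nth 0%N lam i)]
          | i <- iota 0 (size lam)].

Definition jordan_basis (k : fieldType) (n : nat) (X : 'M[k]_n)
  (lam : seq nat) (v : nat -> 'cV[k]_n) : Prop :=
  (forall i, (i < size lam)%N -> (X ^+ (nth 0%N lam i)) *m v i = 0) /\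
  basis_of fullv (jordan_family X lam v).

(* u_j: for q = d_0+...+d_{j-1} < t, the generator v_{d_1+...+d_j}, i.e. the
   last generator among the blocks of size a_{q+1} (1-indexed); 0 if q = t. *)
Definition u_vec (k : fieldType) (n : nat) (lam : seq nat) (v : nat -> 'cV[k]_n)
  (q : nat) : 'cV[k]_n :=
  if (q < size lam)%N then v (q + count (pred1 (nth 0%N lam q)) lam).-1 else 0.

Definition O_enh (k : fieldType) (n : nat) (X : 'M[k]_n) (lam : seq nat)
  (v : nat -> 'cV[k]_n) (q : nat) : pt k n -> Prop :=
  Gbar_orbit X (u_vec lam v q).

Definition w_hat (k : fieldType) (n : nat) (X : 'M[k]_n) (lam : seq nat)
  (v : nat -> 'cV[k]_n) (q : nat) : 'cV[k]_n :=
  \sum_(0 <= i < q) \sum_(1 <= j < nth 0%N lam i) (X ^+ j) *m v i +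
  \sum_(q <= i < size lam) \sum_(0 <= j < nth 0%N lam i) (X ^+ j) *m v i.

From HB Require Import structures.
From mathcomp Require Import all_boot all_order all_algebra.
From mathcomp Require Import mpoly zify.

Set Implicit Arguments.
Unset Strict Implicit.
Unset Printing Implicit Defensive.

Import GRing.Theory.
Local Open Scope ring_scope.

(* If h commutes with X, then for all but finitely many t the matrix g (h + t)
   is invertible and conjugates X like g does, so G.(X, w) contains the points
   (g X g^-1, g h w + t g w) of a line with finitely many exceptions; hence
   (g X g^-1, g h w) lies in its closure.  As O_{lam[q]} is the union of the
   G-orbits of (X, u_j + X z), it suffices to find h commuting with X with
   h w^ = u_j + X z for every z, and one with h (u_j + X z0) = w^ for some z0.
   A matrix commuting with X may send each Jordan generator v_i to any vector
   killed by X^(a_i), and the required images come from the telescoping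
   identity (1 + X + ... + X^(a-1)) (1 - X) = 1 - X^a. *)

Lemma mem_zclosure (k : fieldType) n (S : pt k n -> Prop) p :
  S p -> zclosure S p.
Proof. by move=> Sp P PS; apply: PS. Qed.

Lemma zclosure_sub (k : fieldType) n (S T : pt k n -> Prop) :
  (forall x, S x -> zclosure T x) -> forall p, zclosure S p -> zclosure T p.
Proof. by move=> ST p Sp P PT; apply: Sp => x /ST; apply. Qed.

Lemma horner_mmap_line (R : comNzRingType) N (P : {mpoly R[N]})
    (c0 c1 : 'I_N -> R) t :
  (mmap polyC (fun i => (c0 i)%:P + 'X * (c1 i)%:P) P).[t]
  = P.@[fun i => c0 i + t * c1 i].
Proof.
rewrite /mmap horner_sum mevalE; apply: eq_bigr => m _.
rewrite hornerM hornerC horner_prod; congr (_ * _); apply: eq_bigr => i _.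
by rewrite horner_exp hornerD hornerM hornerX !hornerC.
Qed.

Lemma coords_line (k : fieldType) n (M : 'M[k]_n) (a b : 'cV[k]_n) t i :
  coords (M, a + t *: b) i = coords (M, a) i + t * coords (0, b) i.
Proof.
rewrite /coords /= linearD linearZ /= linear0 !mxE.
by case: split => j; rewrite !mxE ?mulr0 ?addr0.
Qed.

Lemma zclosure_line (k : closedFieldType) n (S : pt k n -> Prop) (M : 'M[k]_n)
    (a b : 'cV[k]_n) (D : {poly k}) :
  D != 0 -> (forall t, D.[t] != 0 -> S (M, a + t *: b)) -> zclosure S (M, a).
Proof.
move=> D_neq0 SD P PS.
set Q := mmap polyC (fun i => (coords (M, a) i)%:P + 'X * (coords (0, b) i)%:P) P.
have QD0 : Q * D = 0.
  apply/eqP; apply: contraT => /closed_nonrootP [t].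
  rewrite /root hornerM mulf_eq0 negb_or => /andP [Qt Dt].
  move: Qt; rewrite horner_mmap_line -(meval_eq _ (coords_line M a b t)).
  by rewrite PS ?eqxx //; apply: SD.
have Q0 : Q = 0.
  by apply/eqP; move/eqP: QD0; rewrite mulf_eq0 (negbTE D_neq0) orbF.
have := horner_mmap_line P (coords (M, a)) (coords (0, b)) 0.
by rewrite -/Q Q0 horner0 => ->; apply: meval_eq => i; rewrite mul0r addr0.
Qed.

Lemma horner_char_polyN (k : fieldType) n (h : 'M[k]_n) t :
  (char_poly (- h)).[t] = \det (h + t%:M).
Proof.
rewrite -[_.[t]]/(horner_eval t (char_poly (- h))) -det_map_mx; congr (\det _).
apply/matrixP => i j; rewrite !mxE /= horner_evalE.
rewrite hornerD hornerN hornerMn hornerX hornerC addrC opprK.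
by case: (i == j).
Qed.

Definition commutant_image (k : fieldType) n (X : 'M[k]_n) (w x : 'cV[k]_n) :=
  exists2 H : 'M[k]_n, H *m X = X *m H & H *m w = x.

Lemma commutant_image_add (k : fieldType) n (X : 'M[k]_n) (w x1 x2 : 'cV[k]_n) :
  commutant_image X w x1 -> commutant_image X w x2 ->
  commutant_image X w (x1 + x2).
Proof.
move=> [H1 H1X <-] [H2 H2X <-]; exists (H1 + H2); last by rewrite mulmxDl.
by rewrite mulmxDl mulmxDr H1X H2X.
Qed.

Lemma zclosure_G_orbit_commutant (k : closedFieldType) n (X : 'M[k]_n)
    (w x : 'cV[k]_n) :
  commutant_image X w x ->
  forall p, G_orbit X x p -> zclosure (G_orbit X w) p.
Proof.
move=> [h hX <-] _ [g [gU ->]].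
apply: (@zclosure_line _ _ _ _ _ (g *m w) (char_poly (- h))).
  by rewrite -size_poly_eq0 size_char_poly.
move=> t Dt; set ht := h + t%:M.
have htU : g *m ht \in unitmx.
  by rewrite unitmx_mul gU unitmxE unitfE -horner_char_polyN.
have htX : ht *m X = X *m ht.
  by rewrite mulmxDl mulmxDr hX mul_scalar_mx mul_mx_scalar.
exists (g *m ht); split => //; congr pair.
  have -> : g *m ht *m X = g *m X *m invmx g *m (g *m ht).
    by rewrite -!mulmxA htX [invmx g *m _]mulmxA mulVmx // mul1mx.
  by rewrite mulmxK.
by rewrite mulmxDr mulmxDl !mulmxA mul_mx_scalar scalemxAl.
Qed.

Lemma Gbar_orbitP (k : fieldType) n (X : 'M[k]_n) (w : 'cV[k]_n) p :
  Gbar_orbit X w p <-> exists z, G_orbit X (w + X *m z) p.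
Proof.
split.
  case=> g [u [gU ->]]; exists (- (invmx g *m u)), g; split => //; congr pair.
  by rewrite mulmxDr addrC !mulmxN !mulmxA.
case=> z [g [gU ->]]; exists g, (- (g *m z)); split => //; congr pair.
by rewrite mulmxN opprK mulmxDr addrC -!mulmxA mulKmx.
Qed.

Lemma linear_mxP (k : fieldType) n (f : {linear 'cV[k]_n -> 'cV[k]_n}) :
  exists H : 'M[k]_n, forall x, H *m x = f x.
Proof.
exists (lin1_mx (trmx \o f \o trmx))^T => x.
by rewrite -[LHS]trmxK trmx_mul trmxK mul_rV_lin1 /= !trmxK.
Qed.

Lemma basis_interpolation (k : fieldType) n (T Y : seq 'cV[k]_n) :
  basis_of fullv T -> size Y = size T ->
  exists H : 'M[k]_n, map (mulmx H) T = Y.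
Proof.
move=> /basis_free freeT sizeY; have [f fT] := linear_of_free T Y.
have [H Hf] := linear_mxP f; exists H.
by rewrite -(fT freeT sizeY); apply: eq_map.
Qed.

Lemma mx_eq_on_span (k : fieldType) n (A C : 'M[k]_n) (T : seq 'cV[k]_n) :
  <<T>>%VS = fullv -> {in T, forall x, A *m x = C *m x} -> A = C.
Proof.
move=> spanT eqT; apply/eqP; rewrite -subr_eq0; apply/eqP/trmx_inj/eqP/mulmxP.
move=> u; rewrite linear0 mulmx0 -[LHS]trmxK trmx_mul trmxK.
have : (fullv <= lker (linfun (mulmx (A - C) : 'cV_n -> 'cV_n)))%VS.
  rewrite -spanT; apply/span_subvP => x /eqT Ax.
  by rewrite memv_ker lfunE /= mulmxBl Ax subrr.
move/subvP/(_ u^T (memvf _)); rewrite memv_ker lfunE /= => /eqP ->.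
by rewrite linear0.
Qed.

Section PowerSums.
Variables (k : fieldType) (n : nat) (X : 'M[k]_n).

Lemma mulmx_pow_commute (H : 'M[k]_n) (w : 'cV[k]_n) j :
  H *m X = X *m H -> H *m (X ^+ j *m w) = X ^+ j *m (H *m w).
Proof. by move=> HX; rewrite !mulmxA; congr (_ *m _); apply: commrX. Qed.

Lemma mulmx_sum_pow_commute (H : 'M[k]_n) (w : 'cV[k]_n) b c :
  H *m X = X *m H ->
  H *m (\sum_(b <= j < c) X ^+ j *m w) = \sum_(b <= j < c) X ^+ j *m (H *m w).
Proof.
by move=> HX; rewrite mulmx_sumr; apply: eq_bigr => j _; apply: mulmx_pow_commute.
Qed.

Lemma sum_pow_telescope (z : 'cV[k]_n) b c : (b <= c)%N ->
  \sum_(b <= j < c) X ^+ j *m (z - X *m z) = X ^+ b *m z - X ^+ c *m z.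
Proof.
move=> bc; rewrite -[RHS]opprB.
have /= <- := telescope_sumr (fun j => X ^+ j *m z) bc.
by rewrite -sumrN; apply: eq_bigr => j _; rewrite mulmxBr opprB mulmxA exprSr.
Qed.

Lemma mulmx_sum_pow_pred (w : 'cV[k]_n) c :
  X *m (\sum_(0 <= j < c.-1) X ^+ j *m w) = \sum_(1 <= j < c) X ^+ j *m w.
Proof.
case: c => [|c]; first by rewrite !big_geq ?mulmx0.
by rewrite big_add1 /= mulmx_sumr; apply: eq_bigr => j _; rewrite mulmxA exprS.
Qed.

End PowerSums.

Lemma sorted_geq_nth (s : seq nat) i j :
  sorted geq s -> (i <= j)%N -> (j < size s)%N -> (nth 0 s j <= nth 0 s i)%N.
Proof.
move=> srt ij js; apply: (sorted_leq_nth (rev_trans leq_trans) leqnn) => //.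
by rewrite inE (leq_ltn_trans ij).
Qed.

Lemma nth_count_mem_path (x : nat) (s : seq nat) :
  path geq x s -> nth 0 (x :: s) (count_mem x s) = x.
Proof.
elim: s x => [//|y s IH] x /= /andP [yx ys].
have [<-|yNx] := eqVneq y x; first exact: IH.
rewrite (count_memPn _) //; apply: contra yNx => xs; rewrite eqn_leq yx.
exact: (allP (order_path_min (rev_trans leq_trans) ys)).
Qed.

Lemma enhanced_index_notin_take (lam : seq nat) q :
  sorted geq lam -> enhanced_index lam q -> (q < size lam)%N ->
  nth 0 lam q \notin take q lam.
Proof.
move=> srt /andP [_ /or3P [/eqP -> | /eqP -> | jump]] qt; rewrite ?take0 //.
  by rewrite ltnn in qt.
apply/negP => /(nthP 0) [r]; rewrite size_take qt => rq.
rewrite nth_take // => ar.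
have q_gt0 : (0 < q)%N by apply: leq_ltn_trans rq.
have le1 : (nth 0 lam q.-1 <= nth 0 lam r)%N.
  apply: sorted_geq_nth => //; first by rewrite -ltnS prednK.
  exact: leq_ltn_trans (leq_pred q) qt.
have le2 : (nth 0 lam q <= nth 0 lam q.-1)%N.
  by apply: sorted_geq_nth; rewrite ?leq_pred.
by move: jump; rewrite eqn_leq le2 -ar le1.
Qed.

Definition u_index (lam : seq nat) (q : nat) : nat :=
  (q + count_mem (nth 0 lam q) lam).-1.

Lemma u_vecE (k : fieldType) n (lam : seq nat) (v : nat -> 'cV[k]_n) q :
  u_vec lam v q = if (q < size lam)%N then v (u_index lam q) else 0.
Proof. by []. Qed.

Lemma u_index_bounds (lam : seq nat) q :
  sorted geq lam -> enhanced_index lam q -> (q < size lam)%N ->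
  (q <= u_index lam q < size lam)%N /\ nth 0 lam (u_index lam q) = nth 0 lam q.
Proof.
move=> srt qE qt; set x := nth 0 lam q.
have drop_q : drop q lam = x :: drop q.+1 lam := drop_nth 0 qt.
have -> : u_index lam q = (q + count_mem x (drop q.+1 lam))%N.
  rewrite /u_index -/x -[in count_mem _ lam](cat_take_drop q lam) count_cat.
  rewrite (count_memPn (enhanced_index_notin_take srt qE qt)) drop_q /=.
  by rewrite eqxx addnS.
split.
  have := count_size (pred1 x) (drop q.+1 lam).
  by rewrite size_drop leq_addr /= => ?; lia.
rewrite -nth_drop drop_q; apply: nth_count_mem_path.
by have := drop_sorted q srt; rewrite drop_q.
Qed.

Definition jordan_indices (lam : seq nat) : seq (nat * nat) :=
  [seq (i, j) | i <- iota 0 (size lam), j <- iota 0 (nth 0 lam i)].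

Lemma mem_jordan_indices (lam : seq nat) i j :
  ((i, j) \in jordan_indices lam) = (i < size lam)%N && (j < nth 0 lam i)%N.
Proof.
apply/allpairsPdep/andP => [[i' [j' [+ + [-> ->]]]] | [it ja]].
  by rewrite !mem_iota.
by exists i, j; rewrite !mem_iota.
Qed.

Lemma jordan_familyE (k : fieldType) n (X : 'M[k]_n) lam (v : nat -> 'cV[k]_n) :
  jordan_family X lam v = [seq X ^+ p.2 *m v p.1 | p <- jordan_indices lam].
Proof.
rewrite /jordan_family /jordan_indices map_flatten -map_comp; congr flatten.
by apply: eq_map => i /=; rewrite -map_comp.
Qed.

Section JordanBasis.
Variables (k : fieldType) (n : nat) (X : 'M[k]_n) (lam : seq nat)
  (v : nat -> 'cV[k]_n).
Hypotheses (lam_sorted : sorted geq lam) (lam_pos : all (fun a => 0 < a)%N lam)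
  (jordanXv : jordan_basis X lam v).

Local Notation t := (size lam).
Local Notation a i := (nth 0%N lam i).

Lemma jordan_chain_annihilated i b j : (i < t)%N -> (a i <= b + j)%N ->
  X ^+ b *m (X ^+ j *m v i) = 0.
Proof.
move=> it abj; have : X ^+ (b + j) *m v i = 0.
  by rewrite -(subnK abj) exprD -mulmxA (proj1 jordanXv) ?mulmx0.
by rewrite exprD -mulmxA.
Qed.

Lemma mx_eq_on_jordan (A C : 'M[k]_n) :
  (forall i j, (i < t)%N -> (j < a i)%N ->
     A *m (X ^+ j *m v i) = C *m (X ^+ j *m v i)) -> A = C.
Proof.
move=> AC; apply: (mx_eq_on_span (T := jordan_family X lam v)).
  by case/andP: (proj2 jordanXv) => /eqP.
move=> x; rewrite jordan_familyE => /mapP [[i j] + ->].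
by rewrite mem_jordan_indices => /andP [it ja]; apply: AC.
Qed.

Lemma jordan_nilpotent : X ^+ a 0 = 0.
Proof.
apply: mx_eq_on_jordan => i j it _; rewrite mul0mx jordan_chain_annihilated //.
exact: leq_trans (sorted_geq_nth lam_sorted (leq0n i) it) (leq_addr j _).
Qed.

Lemma jordan_trivial : t = 0%N -> forall x : 'cV[k]_n, x = 0.
Proof.
move=> /size0nil lam0 x; have := jordan_nilpotent; rewrite lam0 expr0.
by move/(congr1 (mulmx^~ x)); rewrite mul1mx mul0mx.
Qed.

Lemma jordan_interpolation (y : nat -> 'cV[k]_n) :
  exists H : 'M[k]_n, forall i j, (i < t)%N -> (j < a i)%N ->
    H *m (X ^+ j *m v i) = X ^+ j *m y i.
Proof.
have [|H HT] := basis_interpolation (Y := jordan_family X lam y) (proj2 jordanXv).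
  by rewrite !jordan_familyE !size_map.
exists H => i j it ja; move: HT; rewrite !jordan_familyE -map_comp.
by move/eq_in_map/(_ (i, j)); apply; rewrite mem_jordan_indices it ja.
Qed.

Lemma jordan_commutant_ext (y : nat -> 'cV[k]_n) :
  (forall i, (i < t)%N -> X ^+ a i *m y i = 0) ->
  exists2 H : 'M[k]_n, H *m X = X *m H & forall i, (i < t)%N -> H *m v i = y i.
Proof.
move=> Xy; have [H Hv] := jordan_interpolation y; exists H; last first.
  move=> i it; have := Hv i 0%N it; rewrite expr0 !mul1mx; apply.
  exact: (allP lam_pos) (mem_nth 0%N it).
apply: mx_eq_on_jordan => i j it ja.
rewrite -!mulmxA Hv //; have [ja1|aj] := ltnP j.+1 (a i).
  by have := Hv i j.+1 it ja1; rewrite !exprS -!mulmxA.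
have ej : a i = j.+1 by apply/eqP; rewrite eqn_leq aj ja.
have := proj1 jordanXv i it; have := Xy i it.
by rewrite ej !exprS -!mulmxA => -> ->; rewrite mulmx0.
Qed.

End JordanBasis.

Section WHat.
Variables (k : fieldType) (n : nat) (X : 'M[k]_n) (lam : seq nat) (q : nat).

Local Notation t := (size lam).
Local Notation a i := (nth 0%N lam i).

Lemma w_hat_commute (H : 'M[k]_n) (v : nat -> 'cV[k]_n) :
  H *m X = X *m H -> H *m w_hat X lam v q = w_hat X lam (fun i => H *m v i) q.
Proof.
move=> HX; rewrite /w_hat mulmxDr !mulmx_sumr.
by congr (_ + _); apply: eq_bigr => i _; apply: mulmx_sum_pow_commute.
Qed.

Lemma eq_w_hat (v y : nat -> 'cV[k]_n) : (q <= t)%N ->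
  (forall i, (i < t)%N -> v i = y i) -> w_hat X lam v q = w_hat X lam y q.
Proof.
move=> qt vy; rewrite /w_hat.
by congr (_ + _); apply: eq_big_nat => i /andP [_ it]; rewrite vy // (leq_trans it).
Qed.

Lemma w_hat_single i0 (z : 'cV[k]_n) : (i0 < t)%N -> (q <= t)%N ->
  w_hat X lam (fun i => if i == i0 then z else 0) q
  = \sum_((i0 < q) <= j < a i0) X ^+ j *m z.
Proof.
move=> i0t qt.
have single b c d : \sum_(b <= i < c) \sum_(d <= j < a i)
      X ^+ j *m (if i == i0 then z else 0)
    = if (b <= i0 < c)%N then \sum_(d <= j < a i0) X ^+ j *m z else 0.
  rewrite -(@big_nat1_eq _ 0 +%R (fun i => \sum_(d <= j < a i) X ^+ j *m z)).
  rewrite big_mkcond; apply: eq_bigr => i _; case: eqP => [-> | _] //.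
  by rewrite big1 // => j _; rewrite mulmx0.
rewrite /w_hat !single.
by case: ltnP => [i0q | qi0] /=; rewrite ?addr0 ?add0r ?qi0 ?i0t.
Qed.

End WHat.

Section EnhancedOrbit.
Variables (k : fieldType) (n : nat) (lam : seq nat) (q : nat) (X : 'M[k]_n)
  (v : nat -> 'cV[k]_n).
Hypotheses (lam_sorted : sorted geq lam) (lam_pos : all (fun a => 0 < a)%N lam)
  (qE : enhanced_index lam q) (jordanXv : jordan_basis X lam v).

Local Notation t := (size lam).
Local Notation a i := (nth 0%N lam i).
Local Notation w := (w_hat X lam v q).
Local Notation u := (u_vec lam v q).

Lemma q_le_t : (q <= t)%N. Proof. by case/andP: qE. Qed.

(* Send v_i0 to z - X z and the other generators to 0, then telescope. *)
Lemma commutant_image_w_hat_single i0 z : (i0 < t)%N -> X ^+ a i0 *m z = 0 ->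
  commutant_image X w (X ^+ (i0 < q) *m z).
Proof.
move=> i0t Xz; pose y i := if i == i0 then z - X *m z else 0.
have [|H HX Hv] := jordan_commutant_ext lam_pos jordanXv (y := y).
  move=> i _; rewrite /y; case: eqP => [-> | _]; last by rewrite mulmx0.
  by rewrite mulmxBr -(mulmx_pow_commute _ _ (erefl (X *m X))) Xz mulmx0 subrr.
exists H => //; rewrite w_hat_commute // (eq_w_hat X q_le_t Hv).
rewrite w_hat_single ?q_le_t // sum_pow_telescope ?Xz ?subr0 //.
by rewrite (leq_trans (leq_b1 _)) // (allP lam_pos) ?mem_nth.
Qed.

Lemma commutant_image_w_hat_X z : commutant_image X w (X *m z).
Proof.
have [t0|t_gt0] := posnP t.
  rewrite (jordan_trivial lam_sorted jordanXv t0 (X *m z)).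
  by exists 0; rewrite ?mul0mx ?mulmx0.
have Xa0 := jordan_nilpotent lam_sorted jordanXv.
have [q0|q_gt0] := posnP q.
  have := @commutant_image_w_hat_single 0 (X *m z) t_gt0.
  by rewrite q0 expr0 mul1mx Xa0 mul0mx; apply.
have := @commutant_image_w_hat_single 0 z t_gt0.
by rewrite q_gt0 expr1 Xa0 mul0mx; apply.
Qed.

Lemma commutant_image_w_hat_u : commutant_image X w u.
Proof.
rewrite u_vecE; case: ltnP => [qt | _].
  have [/andP [qm mt] _] := u_index_bounds lam_sorted qE qt.
  have := commutant_image_w_hat_single mt (proj1 jordanXv _ mt).
  by rewrite ltnNge qm expr0 mul1mx.
by exists 0; rewrite ?mul0mx ?mulmx0.
Qed.

(* Fix v_i for i < q and send the generator of u to the tail of w; the head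
   of w is then X z0. *)
Lemma commutant_image_u_line_w_hat :
  exists z0, commutant_image X (u + X *m z0) w.
Proof.
pose tail := \sum_(q <= i < t) \sum_(0 <= j < a i) X ^+ j *m v i.
pose z0 := \sum_(0 <= i < q) \sum_(0 <= j < (a i).-1) X ^+ j *m v i.
pose y i := if (i < q)%N then v i else if i == u_index lam q then tail else 0.
have [|H HX Hv] := jordan_commutant_ext lam_pos jordanXv (y := y).
  move=> i it; rewrite /y; case: ifP => [iq | _]; first exact: (proj1 jordanXv).
  case: eqP => [-> | _]; last by rewrite mulmx0.
  rewrite mulmx_sumr big_nat big1 // => i' /andP [qi' i't].
  have [_ a_u] := u_index_bounds lam_sorted qE (leq_ltn_trans qi' i't).
  rewrite mulmx_sumr big1 // => j _.
  rewrite (jordan_chain_annihilated jordanXv) //.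
  by rewrite a_u (leq_trans (sorted_geq_nth lam_sorted qi' i't)) ?leq_addr.
exists z0; exists H => //.
have Hz0 : H *m z0 = z0.
  rewrite mulmx_sumr; apply: eq_big_nat => i /andP [_ iq].
  by rewrite mulmx_sum_pow_commute // Hv ?/y ?iq // (leq_trans iq q_le_t).
have Hu : H *m u = tail.
  rewrite u_vecE; case: ltnP => qt; last by rewrite mulmx0 /tail big_geq.
  have [/andP [qm mt] _] := u_index_bounds lam_sorted qE qt.
  by rewrite Hv // /y ltnNge qm eqxx.
rewrite mulmxDr Hu mulmxA HX -mulmxA Hz0 /w_hat addrC mulmx_sumr; congr (_ + _).
by apply: eq_bigr => i _; apply: mulmx_sum_pow_pred.
Qed.

End EnhancedOrbit.

Theorem proposition4p12 (k : closedFieldType) (n : nat) (lam : seq nat)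
  (q : nat) (X : 'M[k]_n) (v : nat -> 'cV[k]_n) :
  is_partition n lam ->
  enhanced_index lam q ->
  jordan_basis X lam v ->
  forall p : 'M[k]_n * 'cV[k]_n,
    zclosure (O_enh X lam v q) p <-> zclosure (G_orbit X (w_hat X lam v q)) p.
Proof.
move=> [lam_sorted [lam_pos _]] qE jordanXv p.
have [z0 w_hat_mem] := commutant_image_u_line_w_hat lam_sorted lam_pos qE jordanXv.
split; apply: zclosure_sub => x.
  case/Gbar_orbitP => z; apply: zclosure_G_orbit_commutant.
  apply: commutant_image_add; first exact: commutant_image_w_hat_u.
  exact: commutant_image_w_hat_X.
move/(zclosure_G_orbit_commutant w_hat_mem); apply: zclosure_sub => y Gy.
by apply: mem_zclosure; apply/Gbar_orbitP; exists z0.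
Qed.
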